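(* Let $L_{\max}>0$ and let $V$ be a speed-density function on $[0,L_{\max}]$. Define the critical vehicle density $L^*=\arg\max_{0\le L\le L_{\max}}[V(L)L]$ and the optimum vehicle density for the eVCC system $L^\dagger=\arg\max_{0\le L\le L_{\max}}[V(L)^2L]$. Suppose (1) $V$ is monotonically non-increasing and $V(L)\ge 0$ for $0\le L\le L_{\max}$; and (2) either $V$ is concave, or $V(L)=G-\sum_{k=1}^K c_kL^{\alpha_k}$ with $\alpha_k\in(0,+\infty)\cup(-1,-\tfrac12)$, $c_k\ge 0$ for all $k$, and $G\ge 0$. Then $L^\dagger\le L^*$.
   Context: $V(L)$ denotes the average vehicle speed on the road as a function of vehicle density $L$, and $L_{\max}$ is the traffic-jam density. The traffic flow rate is $F=VL$, and $L^*$ maximizes it. In the short-deadline regime the deadline violation probability of the vehicular cloud computing system is (up to constants independent of $L$) $\exp(-c\,L\,V(L)^2)$ with $c>0$, so the density minimizing it is the maximizer $L^\dagger$ of $V(L)^2L$. The maximizers are denoted with argmax as single points. *)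

From Stdlib Require Import Reals List.
Open Scope R_scope.

Definition fsum (f : nat -> R) (K : nat) : R :=
  fold_right Rplus 0 (map f (seq 1 K)).

(* x is the (unique) maximizer of g on [0, Lmax]: "x = argmax_{0<=L<=Lmax} g L"
   with argmax a single point. *)
Definition is_argmax (g : R -> R) (Lmax x : R) : Prop :=
  0 <= x <= Lmax /\
  (forall L, 0 <= L <= Lmax -> g L <= g x) /\
  (forall y, 0 <= y <= Lmax -> (forall L, 0 <= L <= Lmax -> g L <= g y) -> y = x).

Definition nonincreasing_on (V : R -> R) (Lmax : R) : Prop :=
  forall x y, 0 <= x -> x <= y -> y <= Lmax -> V y <= V x.

Definition concave_on (V : R -> R) (Lmax : R) : Prop :=
  forall x y t, 0 <= x <= Lmax -> 0 <= y <= Lmax -> 0 <= t <= 1 ->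
    t * V x + (1 - t) * V y <= V (t * x + (1 - t) * y).

(* V(L) = G - sum_{k=1}^K c_k L^{alpha_k}, alpha_k in (0,+oo) U (-1,-1/2),
   c_k >= 0, G >= 0; the identity is required for 0 < L <= Lmax
   (L^alpha is undefined at L = 0 for negative alpha). *)
Definition power_sum_form (V : R -> R) (Lmax : R) : Prop :=
  exists (K : nat) (c alpha : nat -> R) (G : R),
    (1 <= K)%nat /\ 0 <= G /\
    (forall k, (1 <= k <= K)%nat ->
        0 <= c k /\ (0 < alpha k \/ (-1 < alpha k /\ alpha k < -1/2))) /\
    (forall L, 0 < L <= Lmax ->
        V L = G - fsum (fun k => c k * Rpower L (alpha k)) K).

From Stdlib Require Import Reals List Lra.
Open Scope R_scope.

(* If Ldag > Lstar,
   then V Ldag <= V Lstar and V Ldag * Ldag <= V Lstar * Lstar; multiplying these nonnegative inequalities shows that Lstar also maximizes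
   V L ^ 2 * L, so uniqueness forces Lstar = Ldag, a contradiction. *)

Lemma is_argmax_eq (g : R -> R) (Lmax a b : R) :
  is_argmax g Lmax b -> 0 <= a <= Lmax -> g b <= g a -> a = b.
Proof.
  intros [_ [Hbmax Hbuniq]] Ha Hba.
  apply Hbuniq; [exact Ha |].
  intros L HL; apply (Rle_trans _ (g b)); [apply Hbmax; exact HL | exact Hba].
Qed.

Lemma is_argmax_weighted_le (f g w : R -> R) (Lmax a b : R) :
  nonincreasing_on w Lmax ->
  (forall L, 0 <= L <= Lmax -> 0 <= w L) ->
  (forall L, 0 <= L <= Lmax -> 0 <= f L) ->
  (forall L, 0 <= L <= Lmax -> g L = w L * f L) ->
  is_argmax f Lmax a -> is_argmax g Lmax b -> b <= a.
Proof.
  intros Hw Hw0 Hf0 Hg Ha Hb.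
  destruct Ha as [Ha [Hamax _]].
  destruct (Rle_lt_dec b a) as [Hle | Hlt]; [exact Hle | exfalso].
  assert (Hb01 : 0 <= b <= Lmax) by (destruct Hb; exact H).
  assert (Hgba : g b <= g a).
  { rewrite (Hg b Hb01), (Hg a Ha).
    apply Rmult_le_compat.
    - apply Hw0; exact Hb01.
    - apply Hf0; exact Hb01.
    - apply Hw; lra.
    - apply Hamax; exact Hb01. }
  pose proof (is_argmax_eq g Lmax a b Hb Ha Hgba); lra.
Qed.

Theorem theorem3 (Lmax : R) (V : R -> R) (Lstar Ldag : R) :
  0 < Lmax ->
  is_argmax (fun L => V L * L) Lmax Lstar ->
  is_argmax (fun L => V L ^ 2 * L) Lmax Ldag ->
  nonincreasing_on V Lmax ->
  (forall L, 0 <= L <= Lmax -> 0 <= V L) ->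
  (concave_on V Lmax \/ power_sum_form V Lmax) ->
  Ldag <= Lstar.
Proof.
  intros _ Hstar Hdag Hmono Hpos _.
  apply (is_argmax_weighted_le (fun L => V L * L) (fun L => V L ^ 2 * L) V
           Lmax Lstar Ldag Hmono Hpos); [| intros L _; ring | exact Hstar | exact Hdag].
  intros L HL; apply Rmult_le_pos; [apply Hpos; exact HL | lra].
Qed.
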